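(* Let $d\in\mathbb N\cup\{\infty\}$, $C>0$, and let ${\boldsymbol\gamma}$ be product weights. (1) If ${\boldsymbol\gamma}\in\mathcal S_{d,C}$, then $c:=\prod_{j\in[d]}(1+C^2\gamma_j)\in[1,\infty)$, the product weights ${\boldsymbol\eta}$ given by $\eta_u=C^{2|u|}\gamma_u$ lie in $\mathcal S_{d,C}$, and ${\boldsymbol\eta}\le T^\uparrow_{d,C}{\boldsymbol\gamma}\le c\,{\boldsymbol\eta}$. (2) If ${\boldsymbol\gamma}\in\mathcal M_d$, then with $c':=\prod_{j\in[d]}(1-\gamma_j)\in[0,1]$ and the product weights ${\boldsymbol\zeta}$ given by $\zeta_u=C^{-2|u|}\gamma_u$ we have $c'\,{\boldsymbol\zeta}\le T^\downarrow_{d,C}{\boldsymbol\gamma}\le{\boldsymbol\zeta}$. Furthermore ${\boldsymbol\zeta}\in\mathcal S_{d,C}$ iff ${\boldsymbol\gamma}\in\mathcal S_{d,C}$.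
   Context: Write $[d]=\{1,\dots,d\}$ if $d\in\mathbb N$ and $[d]=\mathbb N$ if $d=\infty$; $[s]=\{1,\dots,s\}$. $\mathcal U_d$ is the set of finite subsets of $[d]$; weights are families $(\gamma_u)_{u\in\mathcal U_d}$ of non-negative reals ($\mathcal W_d$), compared componentwise. Product weights: $\gamma_u=\prod_{j\in u}\gamma_j$, $\gamma_\emptyset=1$, for a non-increasing sequence $(\gamma_j)_{j\in[d]}$ of non-negative reals. $(\Delta_v{\boldsymbol\gamma})_u=\sum_{w\subseteq v}(-1)^{|w|}\gamma_{u\cup w}$; $\mathcal M_d$ is the set of weights with $\Delta_v{\boldsymbol\gamma}\ge\mathbf 0$ for all $v$. For $C>0$: $\mathcal S_{d,C}=\{{\boldsymbol\gamma}\in\mathcal W_d:\sum_vC^{2|v|}\gamma_v<\infty\}$; $(T^\uparrow_{d,C}{\boldsymbol\gamma})_u=\sum_{v\supseteq u}C^{2|v|}\gamma_v$ on $\mathcal S_{d,C}$; on $\mathcal M_d$, $(T^\downarrow_{d,C}{\boldsymbol\gamma})_u=C^{-2|u|}(\Delta_{[d]\setminus u}{\boldsymbol\gamma})_u$ if $d\in\mathbb N$ and $C^{-2|u|}\lim_{s\to\infty}(\Delta_{[s]\setminus u}{\boldsymbol\gamma})_u$ if $d=\infty$. Infinite products are understood as limits of partial products. *)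

From HB Require Import structures.
From mathcomp Require Import all_boot all_order all_algebra.
From mathcomp Require Import finmap.
From mathcomp Require Import all_classical all_reals all_analysis.
Set Implicit Arguments. Unset Strict Implicit. Unset Printing Implicit Defensive.
Import Order.TTheory GRing.Theory Num.Theory numFieldNormedType.Exports.
Local Open Scope classical_set_scope.
Local Open Scope ring_scope.

(* The dimension d ∈ ℕ ∪ {∞}:  Some n = n,  None = ∞. *)
Definition dimension := option nat.

Definition inD (d : dimension) (j : nat) : bool :=
  (1 <= j)%N && (if d is Some n then (j <= n)%N else true).

Definition inU (d : dimension) (u : {fset nat}) : Prop := forall j, j \in u -> inD d j.

Definition seg (s : nat) : {fset nat} := seq_fset tt (iota 1 s).

(* Weights: families indexed by finite subsets (only values on U_d matter). *)
Definition weight (R : realType) := {fset nat} -> R.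

Definition pweight (R : realType) (g : nat -> R) : weight R :=
  fun u => \prod_(j <- u) g j.

Definition prod_seq (R : realType) (d : dimension) (g : nat -> R) : Prop :=
  (forall j, inD d j -> 0 <= g j) /\
  (forall i j, inD d i -> inD d j -> (i <= j)%N -> g j <= g i).

Definition inS (R : realType) (d : dimension) (C : R) (gam : weight R) : Prop :=
  (\esum_(v in [set v | inU d v]) ((C ^+ (2 * #|` v|)) * gam v)%:E < +oo)%E.

Definition Tup (R : realType) (d : dimension) (C : R) (gam : weight R) : weight R :=
  fun u => fine (\esum_(v in [set v | inU d v /\ fsubset u v])
                   ((C ^+ (2 * #|` v|)) * gam v)%:E).

Definition Delta (R : realType) (gam : weight R) (v : {fset nat}) : weight R :=
  fun u => \sum_(w <- fpowerset v) (-1) ^+ #|` w| * gam (fsetU u w).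

Definition inM (R : realType) (d : dimension) (gam : weight R) : Prop :=
  forall v u, inU d v -> inU d u -> 0 <= Delta gam v u.

Definition Tdown (R : realType) (d : dimension) (C : R) (gam : weight R) : weight R :=
  fun u => C ^- (2 * #|` u|) *
    (match d with
     | Some n => Delta gam (fsetD (seg n) u) u
     | None => lim ((fun s : nat => Delta gam (fsetD (seg s) u) u) @ \oo)
     end).

(* partial products ∏_{j ∈ [d], j ≤ s} f j ; the product over [d] is their limit
   (eventually constant when d is finite) *)
Definition pprod (R : realType) (d : dimension) (f : nat -> R) (s : nat) : R :=
  \prod_(1 <= j < s.+1 | inD d j) f j.

(** For product weights all the sums involved factorise.  Summing the
    product weight [a_v] over the finite supersets [v] of [u] inside [[d]]
    gives [a_u * prod_(j in [d] \ u) (1 + a_j)], and for [v] disjoint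
    from [u] the difference [(Delta_v gamma)_u] equals
    [gamma_u * prod_(j in v) (1 - gamma_j)].  With [a_j = C^2 gamma_j] this
    exhibits [T^up gamma] as [eta] times a tail of the product [c], and
    [T^down gamma] as [zeta] times a tail of the product [c']; the tails lie
    in [[1, c]] and [[c', 1]] respectively.  Sums over the infinite family
    [U_d] are controlled through their truncations to subsets of
    [[d] ∩ {1..s}], so that a product weight is summable iff the partial
    products of [1 + a_j] are bounded; by Bernoulli's inequality this is
    unaffected by scaling [a] with a positive constant, which yields the
    membership statements for [eta] and [zeta]. *)

From HB Require Import structures.
From mathcomp Require Import all_boot all_order all_algebra.
From mathcomp Require Import finmap.
From mathcomp Require Import all_classical all_reals all_analysis.
From mathcomp Require Import lra.
Set Implicit Arguments. Unset Strict Implicit. Unset Printing Implicit Defensive.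
Import Order.TTheory GRing.Theory Num.Theory numFieldNormedType.Exports.
Local Open Scope classical_set_scope.
Local Open Scope ring_scope.

Section FsetBigops.
Local Open Scope fset_scope.
Variables (R : Type) (idx : R) (op : Monoid.com_law idx) (I : choiceType).

Lemma big_fsetU_disjoint (A B : {fset I}) (F : I -> R) : [disjoint A & B] ->
  \big[op/idx]_(i <- A `|` B) F i =
  op (\big[op/idx]_(i <- A) F i) (\big[op/idx]_(i <- B) F i).
Proof.
move=> /fdisjointP AB; rewrite -big_cat; apply/perm_big/uniq_perm.
- exact: fset_uniq.
- rewrite cat_uniq !fset_uniq /= andbT; apply/hasPn => j jB.
  by apply/negP => /AB; rewrite jB.
- by move=> j; rewrite !inE mem_cat.
Qed.

Lemma big_fsetD_split (A B : {fset I}) (F : I -> R) : A `<=` B ->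
  \big[op/idx]_(i <- B) F i =
  op (\big[op/idx]_(i <- A) F i) (\big[op/idx]_(i <- B `\` A) F i).
Proof.
move=> AB; rewrite -big_fsetU_disjoint; last first.
  by apply/fdisjointP => j jA; rewrite inE jA.
by apply: eq_fbigl => j; rewrite !inE; case: (boolP (j \in A)) => // /(fsubsetP AB).
Qed.

Lemma in_fset_filter (A : {fset I}) (P : pred I) x :
  (x \in [fset y in A | P y]) = (x \in A) && P x.
Proof. by rewrite in_fset. Qed.

End FsetBigops.

Section Powersets.
Local Open Scope fset_scope.
Variable T : choiceType.

Lemma fpowersetU1 (x : T) (A : {fset T}) : x \notin A ->
  fpowerset (x |` A) = fpowerset A `|` [fset x |` w | w in fpowerset A].
Proof.
move=> xA; apply/fsetP => w; rewrite in_fsetU !fpowersetE.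
apply/idP/orP => [wxA|[wA|/imfsetP[/= w' + ->]]].
- have [xw|xw] := boolP (x \in w); [right|left].
    apply/imfsetP; exists (w `\ x); last by rewrite fsetD1K.
    rewrite fpowersetE; apply/fsubsetP => j; rewrite !inE => /andP[jx jw].
    by have := fsubsetP wxA j jw; rewrite !inE (negPf jx).
  apply/fsubsetP => j jw; have := fsubsetP wxA j jw.
  by rewrite !inE => /orP[/eqP jx|//]; rewrite -jx jw in xw.
- by apply: fsubset_trans wA (fsubsetUr _ _).
- by rewrite fpowersetE => w'A; apply: fsetUS.
Qed.

Lemma big_fpowersetU1 (R : nmodType) (x : T) (A : {fset T}) (F : {fset T} -> R) :
  x \notin A ->
  \sum_(w <- fpowerset (x |` A)) F w = \sum_(w <- fpowerset A) (F w + F (x |` w)).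
Proof.
move=> xA; have xNw w : w \in fpowerset A -> x \notin w.
  by rewrite fpowersetE => /fsubsetP wA; apply: contra xA => /wA.
rewrite fpowersetU1 // big_fsetU_disjoint; last first.
  apply/fdisjointP => w /xNw xw; apply/imfsetP => -[/= w' _ ww'].
  by rewrite ww' fset1U1 in xw.
rewrite big_split; apply: f_equal2 => //; rewrite big_imfset //=.
by move=> w1 w2 /xNw xw1 /xNw xw2 /(congr1 (fun w => w `\ x)); rewrite !fsetU1K.
Qed.

Lemma big_fpowerset_prodD (R : comPzSemiRingType) (a b : T -> R) (A : {fset T}) :
  \sum_(w <- fpowerset A) (\prod_(j <- w) a j * \prod_(j <- A `\` w) b j) =
  \prod_(j <- A) (a j + b j).
Proof.
elim/fset1U_rect: A => [|x A xA IH].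
  by rewrite fpowerset0 big_seq_fset1 fsetDv !big_seq_fset0 mulr1.
rewrite big_fpowersetU1 // big_fsetU1 //= -IH big_distrr.
apply: eq_big_seq => w; rewrite fpowersetE => /fsubsetP wA.
have xw : x \notin w by apply: contra xA => /wA.
have -> : (x |` A) `\` w = x |` (A `\` w).
  by apply/fsetP => j; rewrite !inE; case: eqP => // ->; rewrite xw.
have -> : (x |` A) `\` (x |` w) = A `\` w.
  by apply/fsetP => j; rewrite !inE; case: eqP => // ->; rewrite (negPf xA) andbF.
rewrite !big_fsetU1 ?inE ?(negPf xA) ?andbF //.
by rewrite /= mulrDl addrC -mulrA [_ * (b x * _)]mulrCA.
Qed.

Lemma big_fpowerset_supsets (R : comPzSemiRingType) (a : T -> R) (A u : {fset T}) :
  u `<=` A ->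
  \sum_(v <- fpowerset A | u `<=` v) \prod_(j <- v) a j =
  \prod_(j <- u) a j * \prod_(j <- A `\` u) (1 + a j).
Proof.
move=> uA.
(* The factor [prod_(j in A \ v) [j \notin u]] is the indicator of [u <= v],
   so the restricted sum is an unrestricted expansion of a product. *)
have indicator v : \prod_(j <- A `\` v) ((j \notin u)%:R : R) = (u `<=` v)%:R.
  have [uv|/fsubsetPn[j ju jv]] := boolP (u `<=` v).
    apply: big1_fset => j; rewrite !inE => /andP[jv _] _.
    by rewrite (contra (fsubsetP uv j) jv).
  by rewrite (big_fsetD1 j) ?inE ?jv ?(fsubsetP uA) // ju /= mul0r.
rewrite big_mkcond (eq_bigr (fun v : {fset T} =>
  \prod_(j <- v) a j * \prod_(j <- A `\` v) ((j \notin u)%:R : R))); last first.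
  by move=> v _; rewrite indicator; case: (u `<=` v); rewrite ?mulr1 ?mulr0.
rewrite big_fpowerset_prodD (big_fsetD_split _ _ uA) /=; congr (_ * _).
  by apply: eq_big_seq => j ->; rewrite addr0.
by apply: eq_big_seq => j /[!inE] /andP[/negPf -> _]; rewrite addrC.
Qed.

End Powersets.

Section OrderedProducts.
Local Open Scope fset_scope.
Variables (R : numDomainType) (I : choiceType).

Lemma prodr_ge1 (r : seq I) (f : I -> R) :
  {in r, forall j, 1 <= f j} -> 1 <= \prod_(j <- r) f j.
Proof.
move=> f_ge1; rewrite big_seq; apply: (big_ind (>= 1)) => // x y.
exact: mulr_ege1.
Qed.

Lemma prod_fsubset_ge1 (A B : {fset I}) (f : I -> R) : A `<=` B ->
  {in B, forall j, 1 <= f j} -> \prod_(j <- A) f j <= \prod_(j <- B) f j.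
Proof.
move=> AB f_ge1; rewrite (big_fsetD_split _ _ AB) /= ler_peMr //.
  rewrite big_seq; apply: prodr_ge0 => j /(fsubsetP AB) /f_ge1; exact: le_trans.
by apply: prodr_ge1 => j /[!inE] /andP[_ /f_ge1].
Qed.

Lemma prod_fsubset_le (A B : {fset I}) (f : I -> R) : A `<=` B ->
  {in B, forall j, 0 <= f j <= 1} -> \prod_(j <- B) f j <= \prod_(j <- A) f j.
Proof.
move=> AB f01; rewrite (big_fsetD_split _ _ AB) /= ler_piMr //.
  by rewrite big_seq; apply: prodr_ge0 => j /(fsubsetP AB) /f01 /andP[].
by rewrite big_seq; apply: prodr_ile1 => j /[!inE] /andP[_ /f01].
Qed.

End OrderedProducts.

Section Truncation.
Local Open Scope fset_scope.
Variable d : dimension.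

Definition dseg (s : nat) : {fset nat} := [fset j in seg s | inD d j].

Lemma mem_seg s j : (j \in seg s) = (1 <= j <= s)%N.
Proof. by rewrite seq_fsetE mem_iota add1n ltnS. Qed.

Lemma mem_dseg s j : (j \in dseg s) = inD d j && (j <= s)%N.
Proof. by rewrite !inE /= mem_seg /inD; case: (1 <= j)%N; rewrite //= andbC. Qed.

Lemma dseg_homo : {homo dseg : s t / (s <= t)%N >-> s `<=` t}.
Proof.
move=> s t st; apply/fsubsetP => j; rewrite !mem_dseg => /andP[-> /= js].
exact: leq_trans js st.
Qed.

Lemma inU_dseg s v : v `<=` dseg s -> inU d v.
Proof. by move=> /fsubsetP vs j /vs; rewrite mem_dseg => /andP[]. Qed.

Lemma dseg_bigmax u : inU d u -> u `<=` dseg (\max_(j <- u) j).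
Proof. by move=> uU; apply/fsubsetP => j ju; rewrite mem_dseg uU ?leq_bigmax_seq. Qed.

Lemma dseg_cover (X : set {fset nat}) s0 :
  finite_set X -> (X `<=` [set v | inU d v])%classic ->
  exists2 s, (s0 <= s)%N & forall v, X v -> v `<=` dseg s.
Proof.
move=> finX XU; exists (maxn s0 (\max_(v <- fset_set X) \max_(j <- v) j)).
  exact: leq_maxl.
move=> v Xv; apply: fsubset_trans (dseg_bigmax (XU v Xv)) _.
apply/dseg_homo/(leq_trans _ (leq_maxr _ _)).
apply: (leq_bigmax_seq (F := fun w : {fset nat} => \max_(j <- w) j)) => //.
by rewrite in_fset_set ?inE.
Qed.

Lemma pprod_dseg (R : realType) (f : nat -> R) s :
  pprod d f s = \prod_(j <- dseg s) f j.
Proof.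
rewrite /pprod /dseg -big_fset_condE; apply/perm_big/uniq_perm.
- exact: iota_uniq.
- exact: fset_uniq.
- by move=> j; rewrite mem_seg mem_index_iota ltnS.
Qed.

End Truncation.

Lemma dseg_Some n : dseg (Some n) n = seg n.
Proof.
by apply/fsetP => j; rewrite mem_dseg mem_seg /inD; case: (1 <= j)%N; rewrite ?andbb.
Qed.

Lemma dseg_None s : dseg None s = seg s.
Proof. by apply/fsetP => j; rewrite mem_dseg mem_seg /inD andbT. Qed.

Section EsumTruncation.
Variables (R : realType) (d : dimension) (P : pred {fset nat}) (f : {fset nat} -> R).

Lemma esum_ge_fpowerset_dseg s :
  ((\sum_(v <- fpowerset (dseg d s) | P v) f v)%:E <=
   \esum_(v in [set v | inU d v /\ P v]) (f v)%:E)%E.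
Proof.
apply: esum_ge; exists [set` [fset v in fpowerset (dseg d s) | P v]%fset].
  split; first exact: finite_fset.
  by move=> v /=; rewrite !inE /= fpowersetE => /andP[/inU_dseg].
by rewrite -fsbig_seq ?fset_uniq // -big_fset_condE sumEFin.
Qed.

Hypothesis f_ge0 : forall v, inU d v -> P v -> 0 <= f v.

Lemma esum_le_fpowerset_dseg (M : R) s0 :
  (forall s, (s0 <= s)%N -> \sum_(v <- fpowerset (dseg d s) | P v) f v <= M) ->
  (\esum_(v in [set v | inU d v /\ P v]) (f v)%:E <= M%:E)%E.
Proof.
move=> le_M; apply: ge_ereal_sup => _ [X [finX XD] <-].
have [s s0s Xs] := dseg_cover s0 finX (fun v Xv => (XD v Xv).1).
apply: (@le_trans _ _
  (\sum_(v \in [set` [fset v in fpowerset (dseg d s) | P v]%fset]) (f v)%:E)%E).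
  apply: lee_fsum_nneg_subset => // [v /set_mem Xv|v].
    by rewrite !inE /= in_fset_filter fpowersetE Xs //; case: (XD v Xv).
  rewrite !inE /= mem_setE in_fset_filter fpowersetE.
  by move=> /andP[_ /andP[/inU_dseg vU Pv]]; rewrite lee_fin f_ge0.
by rewrite -fsbig_seq ?fset_uniq // -big_fset_condE sumEFin lee_fin le_M.
Qed.

End EsumTruncation.

Section PartialProducts.
Variables (R : realType) (d : dimension) (f : nat -> R).

Lemma pprod0 : pprod d f 0 = 1.
Proof. by rewrite /pprod big_geq. Qed.

Lemma pprodS s : pprod d f s.+1 = pprod d f s * (if inD d s.+1 then f s.+1 else 1).
Proof. by rewrite /pprod big_mkcond big_nat_recr // -big_mkcond. Qed.

Lemma pprod_ge1_cvg : (forall j, inD d j -> 1 <= f j) ->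
  (exists M, forall s, pprod d f s <= M) ->
  exists c : R, [/\ pprod d f @ \oo --> c, 1 <= c & forall s, pprod d f s <= c].
Proof.
move=> f_ge1 [M le_M].
have nd : nondecreasing_seq (pprod d f).
  apply/nondecreasing_seqP => s; rewrite pprodS ler_peMr //.
    by apply: prodr_ge0 => j /f_ge1; apply: le_trans.
  by case: ifP => // /f_ge1.
have cv : cvgn (pprod d f) by apply: nondecreasing_is_cvgn nd _; exists M => _ [s _ <-].
exists (limn (pprod d f)); split => //; last exact: nondecreasing_cvgn_le.
by rewrite -pprod0 nondecreasing_cvgn_le.
Qed.

Lemma pprod_le1_cvg : (forall j, inD d j -> 0 <= f j <= 1) ->
  exists c : R, [/\ pprod d f @ \oo --> c, 0 <= c <= 1 & forall s, c <= pprod d f s].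
Proof.
move=> f01; have p_ge0 s : 0 <= pprod d f s by apply: prodr_ge0 => j /f01 /andP[].
have ni : nonincreasing_seq (pprod d f).
  apply/nonincreasing_seqP => s; rewrite pprodS ler_piMr //.
  by case: ifP => // /f01 /andP[].
have cv : cvgn (pprod d f) by apply: nonincreasing_is_cvgn ni _; exists 0 => _ [s _ <-].
exists (limn (pprod d f)); split => //; last exact: nonincreasing_cvgn_ge.
apply/andP; split; first by apply: limr_ge cv _; apply: nearW.
by rewrite -pprod0 nonincreasing_cvgn_ge.
Qed.

End PartialProducts.

Lemma bernoulli_ineq (R : realDomainType) (x : R) n :
  0 <= x -> 1 + n%:R * x <= (1 + x) ^+ n.
Proof.
move=> x_ge0; elim: n => [|n IH]; first by rewrite mul0r addr0.
have n_ge0 : 0 <= n%:R :> R by [].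
rewrite exprSr -natr1 mulrDl mul1r; nra.
Qed.

Lemma pprod_bounded_scale (R : realType) (d : dimension) (b : nat -> R) (k : R) :
  (forall j, inD d j -> 0 <= b j) -> 0 <= k ->
  (exists M, forall s, pprod d (fun j => 1 + b j) s <= M) ->
  exists M, forall s, pprod d (fun j => 1 + k * b j) s <= M.
Proof.
move=> b_ge0 k_ge0 [M le_M]; pose K := Num.bound k.
have p_ge0 s : 0 <= pprod d (fun j => 1 + b j) s.
  by apply: prodr_ge0 => j /b_ge0 bj; rewrite addr_ge0.
exists (M ^+ K) => s; apply: (@le_trans _ _ (pprod d (fun j => (1 + b j) ^+ K) s)).
  apply: ler_prod => j /b_ge0 bj; rewrite addr_ge0 ?mulr_ge0 //=.
  apply: le_trans (bernoulli_ineq K bj); rewrite lerD2l ler_wpM2r //.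
  exact/ltW/archi_boundP.
rewrite /pprod prodrXl; apply: lerXn2r; rewrite ?nnegrE.
- exact: p_ge0.
- exact: le_trans (p_ge0 s) (le_M s).
- exact: le_M.
Qed.

Definition pweight_summable (R : realType) (d : dimension) (a : nat -> R) : Prop :=
  (\esum_(v in [set v | inU d v]) (pweight a v)%:E < +oo)%E.

Section ProductWeights.
Variables (R : realType) (d : dimension) (a : nat -> R).
Hypothesis a_ge0 : forall j, inD d j -> 0 <= a j.

Lemma pweight_ge0 v : inU d v -> 0 <= pweight a v.
Proof. by move=> vU; rewrite /pweight big_seq; apply: prodr_ge0 => j /vU /a_ge0. Qed.

Lemma esum_supsets_pweight_le u M : inU d u ->
  (\esum_(v in [set v | inU d v /\ fsubset u v]) (pweight a v)%:E <= M%:E)%E <->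
  (forall s, (u `<=` dseg d s)%fset ->
     pweight a u * \prod_(j <- (dseg d s `\` u)%fset) (1 + a j) <= M).
Proof.
move=> uU; split => [le_M s us|le_M].
  rewrite -lee_fin -big_fpowerset_supsets //; apply: le_trans le_M.
  exact: (esum_ge_fpowerset_dseg d (fsubset u)).
apply: (esum_le_fpowerset_dseg (P := fsubset u) _ (s0 := \max_(j <- u) j)).
  by move=> v vU _; apply: pweight_ge0.
move=> s us; have uds := fsubset_trans (dseg_bigmax uU) (dseg_homo d us).
by rewrite big_fpowerset_supsets // le_M.
Qed.

Lemma pweight_summableP :
  pweight_summable d a <-> exists M, forall s, pprod d (fun j => 1 + a j) s <= M.
Proof.
have U0 : inU d fset0 by move=> j; rewrite inE.
have pweight0 s :
    pweight a fset0 * \prod_(j <- (dseg d s `\` fset0)%fset) (1 + a j) =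
    pprod d (fun j => 1 + a j) s.
  by rewrite /pweight big_seq_fset0 mul1r fsetD0 pprod_dseg.
rewrite /pweight_summable (_ : [set v | inU d v] = [set v | inU d v /\ fsubset fset0 v]).
  set S := esum _ _; have S_ge0 : (0 <= S)%E.
    by apply: esum_ge0 => v [vU _]; rewrite lee_fin pweight_ge0.
  split => [S_lty|[M le_M]].
    exists (fine S) => s; rewrite -pweight0.
    apply: (esum_supsets_pweight_le _ U0).1 (fsub0set _).
    by rewrite fineK // ge0_fin_numE.
  apply: le_lt_trans (ltry M); apply/esum_supsets_pweight_le => // s _.
  by rewrite pweight0.
by apply/seteqP; split => v /= => [vU|[]//]; rewrite fsub0set.
Qed.

Lemma fine_esum_supsets_pweight_bounds (c : R) u : inU d u ->
  (forall s, pprod d (fun j => 1 + a j) s <= c) ->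
  pweight a u
    <= fine (\esum_(v in [set v | inU d v /\ fsubset u v]) (pweight a v)%:E)
    <= c * pweight a u.
Proof.
move=> uU le_c; set S := esum _ _.
have one_add_ge1 s : {in dseg d s, forall j, 1 <= 1 + a j}.
  by move=> j; rewrite mem_dseg lerDl => /andP[/a_ge0].
have S_ge0 : (0 <= S)%E by apply: esum_ge0 => v [vU _]; rewrite lee_fin pweight_ge0.
have S_le : (S <= (c * pweight a u)%:E)%E.
  apply/esum_supsets_pweight_le => // s us; rewrite [X in _ <= X]mulrC.
  rewrite ler_wpM2l ?pweight_ge0 //; apply: le_trans (le_c s); rewrite pprod_dseg.
  exact: prod_fsubset_ge1 (fsubsetDl _ _) (one_add_ge1 s).
have S_fin : S \is a fin_num by rewrite ge0_fin_numE // (le_lt_trans S_le) ?ltry.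
rewrite -lee_fin fineK // S_le andbT.
have := (esum_supsets_pweight_le (fine S) uU).1 _ _ (dseg_bigmax uU).
rewrite fineK // => /(_ (lexx _)); apply: le_trans; rewrite ler_peMr ?pweight_ge0 //.
by apply: prodr_ge1 => j; rewrite in_fsetD => /andP[_]; apply: one_add_ge1.
Qed.

End ProductWeights.

Lemma pweight_summableZ (R : realType) (d : dimension) (a : nat -> R) (k : R) :
  (forall j, inD d j -> 0 <= a j) -> 0 < k ->
  pweight_summable d (fun j => k * a j) <-> pweight_summable d a.
Proof.
move=> a_ge0 k_gt0; have ka_ge0 j : inD d j -> 0 <= k * a j.
  by move/a_ge0; apply: mulr_ge0; exact: ltW.
have kV_ge0 : 0 <= k^-1 by rewrite invr_ge0 ltW.
rewrite pweight_summableP // pweight_summableP //.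
split=> [/(pprod_bounded_scale ka_ge0 kV_ge0)|/(pprod_bounded_scale a_ge0 (ltW k_gt0))//].
suff -> : (fun j => 1 + k^-1 * (k * a j)) = (fun j => 1 + a j) by [].
by apply/funext => j; rewrite mulKf ?gt_eqF.
Qed.

Lemma pweight_scale (R : realType) (k : R) (a : nat -> R) u :
  k ^+ #|` u| * pweight a u = pweight (fun j => k * a j) u.
Proof. by rewrite /pweight big_split /= big_const_seq count_predT iter_mulr_1. Qed.

Lemma inS_pweight (R : realType) (d : dimension) (C : R) (a : nat -> R) :
  inS d C (pweight a) <-> pweight_summable d (fun j => C ^+ 2 * a j).
Proof. by rewrite /inS; under eq_esum do rewrite exprM pweight_scale. Qed.

Lemma Tup_pweight (R : realType) (d : dimension) (C : R) (a : nat -> R) u :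
  Tup d C (pweight a) u =
  fine (\esum_(v in [set v | inU d v /\ fsubset u v])
          (pweight (fun j => C ^+ 2 * a j) v)%:E).
Proof. by rewrite /Tup; under eq_esum do rewrite exprM pweight_scale. Qed.

Lemma Delta_pweight (R : realType) (g : nat -> R) (u v : {fset nat}) :
  [disjoint u & v]%fset ->
  Delta (pweight g) v u = pweight g u * \prod_(j <- v) (1 - g j).
Proof.
move=> /fdisjointP uv; under [X in _ = _ * X]eq_bigr do rewrite addrC.
rewrite /Delta -(big_fpowerset_prodD (fun j => - g j) (fun=> 1)) big_distrr /=.
apply: eq_big_seq => w; rewrite fpowersetE => /fsubsetP wv.
rewrite /pweight big_fsetU_disjoint /=; last first.
  by apply/fdisjointP => j /uv; apply: contra (wv j).
have -> : \prod_(j <- w) - g j = (-1) ^+ #|` w| * pweight g w.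
  by rewrite pweight_scale; apply: eq_bigr => j _; rewrite mulN1r.
by rewrite big1_eq mulr1 mulrCA.
Qed.

Lemma inM_pweight_le1 (R : realType) (d : dimension) (g : nat -> R) :
  inM d (pweight g) -> forall j, inD d j -> g j <= 1.
Proof.
move=> gM j jd; have := gM [fset j]%fset fset0.
rewrite Delta_pweight ?fdisjoint0X // /pweight big_seq_fset0 big_seq_fset1.
rewrite mul1r subr_ge0.
by apply => [i /[!inE] /eqP ->|i]; rewrite ?inE.
Qed.

Lemma limn_nonincreasing_bounds (R : realType) (u : R ^nat) (m M : R) :
  nonincreasing_seq u -> (forall n, m <= u n <= M) -> m <= limn u <= M.
Proof.
move=> ni uB; have cv : cvgn u.
  by apply: nonincreasing_is_cvgn ni _; exists m => _ [n _ <-]; case/andP: (uB n).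
apply/andP; split; first by apply: limr_ge cv _; apply: nearW => n; case/andP: (uB n).
by apply: le_trans (nonincreasing_cvgn_ge ni cv 0) _; case/andP: (uB 0).
Qed.

Lemma one_sub_itv01 (R : numDomainType) (x : R) : 0 <= x <= 1 -> 0 <= 1 - x <= 1.
Proof. by move=> /andP[x0 x1]; rewrite subr_ge0 x1 gerBl x0. Qed.

Section DeltaProductWeights.
Variables (R : realType) (d : dimension) (g : nat -> R) (c : R).
Hypothesis g01 : forall j, inD d j -> 0 <= g j <= 1.
Hypothesis le_c : forall s, c <= pprod d (fun j => 1 - g j) s.

Let g_ge0 j : inD d j -> 0 <= g j. Proof. by move/g01/andP=> []. Qed.

Let one_sub01 j : inD d j -> 0 <= 1 - g j <= 1.
Proof. by move/g01/one_sub_itv01. Qed.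

Lemma Delta_seg_pweight_bounds u s : inU d u -> dseg d s = seg s ->
  c * pweight g u <= Delta (pweight g) (seg s `\` u)%fset u <= pweight g u.
Proof.
move=> uU ds; rewrite Delta_pweight; last by apply/fdisjointP => j ju; rewrite inE ju.
have pw_ge0 := pweight_ge0 g_ge0 uU.
have seg01 : {in seg s, forall j, 0 <= 1 - g j <= 1}.
  by move=> j; rewrite -ds mem_dseg => /andP[/one_sub01].
apply/andP; split.
  rewrite mulrC ler_wpM2l //; apply: le_trans (le_c s) _; rewrite pprod_dseg ds.
  exact: prod_fsubset_le (fsubsetDl _ _) seg01.
rewrite ler_piMr // big_seq; apply: prodr_ile1 => j.
by rewrite in_fsetD => /andP[_ /seg01].
Qed.

Lemma lim_Delta_seg_pweight_bounds u : inU d u -> (forall s, dseg d s = seg s) ->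
  c * pweight g u <= lim ((fun s => Delta (pweight g) (seg s `\` u)%fset u) @ \oo)
                  <= pweight g u.
Proof.
move=> uU ds; apply: limn_nonincreasing_bounds => [|s]; last first.
  exact: Delta_seg_pweight_bounds.
have dis s : [disjoint u & seg s `\` u]%fset.
  by apply/fdisjointP => j ju; rewrite inE ju.
apply/nonincreasing_seqP => s.
rewrite !Delta_pweight // ler_wpM2l ?(pweight_ge0 g_ge0 uU) //.
apply: prod_fsubset_le; first by rewrite fsetSD // -!ds dseg_homo.
by move=> j; rewrite in_fsetD -ds mem_dseg => /andP[_ /andP[/one_sub01]].
Qed.

End DeltaProductWeights.

Lemma Tdown_pweight_bounds (R : realType) (d : dimension) (C : R) (g : nat -> R) :
  0 < C -> (forall j, inD d j -> 0 <= g j <= 1) ->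
  exists c : R, [/\ pprod d (fun j => 1 - g j) @ \oo --> c, 0 <= c <= 1 &
    forall u, inU d u ->
      c * (C ^- (2 * #|` u|) * pweight g u) <= Tdown d C (pweight g) u
                                            <= C ^- (2 * #|` u|) * pweight g u].
Proof.
move=> C_gt0 g01.
have one_sub01 j : inD d j -> 0 <= 1 - g j <= 1 by move/g01/one_sub_itv01.
have [c [cvg_c c01 le_c]] := pprod_le1_cvg (f := fun j => 1 - g j) one_sub01.
exists c; split => // u uU; rewrite /Tdown mulrCA !ler_pM2l ?invr_gt0 ?exprn_gt0 //.
case: d g01 le_c uU {cvg_c one_sub01} => [n|] g01 le_c uU /=.
  exact (Delta_seg_pweight_bounds g01 le_c uU (dseg_Some n)).
exact (lim_Delta_seg_pweight_bounds g01 le_c uU dseg_None).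
Qed.

Lemma Tup_pweight_bounds (R : realType) (d : dimension) (C : R) (g : nat -> R) :
  0 < C -> (forall j, inD d j -> 0 <= g j) -> inS d C (pweight g) ->
  exists c : R, [/\ pprod d (fun j => 1 + C ^+ 2 * g j) @ \oo --> c, 1 <= c &
    forall u, inU d u ->
      C ^+ (2 * #|` u|) * pweight g u <= Tup d C (pweight g) u
                                      <= c * (C ^+ (2 * #|` u|) * pweight g u)].
Proof.
move=> C_gt0 g_ge0 gS.
have a_ge0 j : inD d j -> 0 <= C ^+ 2 * g j.
  by move/g_ge0; apply: mulr_ge0; rewrite exprn_ge0 // ltW.
have one_add_ge1 j : inD d j -> 1 <= 1 + C ^+ 2 * g j by move/a_ge0; rewrite lerDl.
have bounded := (pweight_summableP a_ge0).1 ((inS_pweight d C g).1 gS).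
have [c [cvg_c c_ge1 le_c]] := pprod_ge1_cvg one_add_ge1 bounded.
exists c; split => // u uU; rewrite Tup_pweight exprM pweight_scale.
exact: fine_esum_supsets_pweight_bounds.
Qed.

Theorem mainTheorem8 (R : realType) (d : dimension) (C : R) (g : nat -> R) :
  0 < C -> prod_seq d g ->
  (* (1) *)
  (inS d C (pweight g) ->
    exists c : R,
      (pprod d (fun j => 1 + C ^+ 2 * g j) @ \oo --> c) /\
      1 <= c /\
      inS d C (fun u => C ^+ (2 * #|` u|) * pweight g u) /\
      (forall u, inU d u ->
         C ^+ (2 * #|` u|) * pweight g u <= Tup d C (pweight g) u /\
         Tup d C (pweight g) u <= c * (C ^+ (2 * #|` u|) * pweight g u)))
  /\
  (* (2) *)
  (inM d (pweight g) ->
    (exists c' : R,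
      (pprod d (fun j => 1 - g j) @ \oo --> c') /\
      0 <= c' <= 1 /\
      (forall u, inU d u ->
         c' * (C ^- (2 * #|` u|) * pweight g u) <= Tdown d C (pweight g) u /\
         Tdown d C (pweight g) u <= C ^- (2 * #|` u|) * pweight g u)) /\
    (inS d C (fun u => C ^- (2 * #|` u|) * pweight g u) <-> inS d C (pweight g))).
Proof.
move=> C_gt0 [g_ge0 _]; have C2_gt0 : 0 < C ^+ 2 by rewrite exprn_gt0.
split => [gS|gM].
  have [c [cvg_c c_ge1 Tup_bounds]] := Tup_pweight_bounds C_gt0 g_ge0 gS.
  exists c; do 3!split => //; last by move=> u /Tup_bounds /andP.
  have eta_pweight : (fun u => C ^+ (2 * #|` u|) * pweight g u) =
                     pweight (fun j => C ^+ 2 * g j).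
    by apply/funext => u; rewrite exprM pweight_scale.
  rewrite eta_pweight inS_pweight pweight_summableZ //; last first.
    by move=> j /g_ge0; apply: mulr_ge0; exact: ltW.
  exact/inS_pweight.
have g01 j : inD d j -> 0 <= g j <= 1 by move=> jd; rewrite g_ge0 ?(inM_pweight_le1 gM).
split.
  have [c' [cvg_c' c'01 Tdown_bounds]] := Tdown_pweight_bounds C_gt0 g01.
  by exists c'; do 2!split => //; move=> u /Tdown_bounds /andP.
have zeta_pweight : (fun u => C ^- (2 * #|` u|) * pweight g u) =
                    pweight (fun j => (C ^+ 2)^-1 * g j).
  by apply/funext => u; rewrite exprM -exprVn pweight_scale.
rewrite zeta_pweight !inS_pweight !pweight_summableZ ?invr_gt0 // => j /g_ge0.
by apply: mulr_ge0; rewrite invr_ge0 ltW.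
Qed.
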